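(* Let $G$, $\Sigma_o$, $S$ realized by $H=(Z,\Sigma,\xi,z_0)$, and $\Sigma_v\subseteq\Sigma_o$ be given, with All Attack Structure $M=(Q,\Sigma_M,f,q_0)$. For any attacker $A$ and any observation $\alpha\sigma\in P(\mathcal{L}(S_A/G))$ ($\sigma\in\Sigma_o$) such that $A$ is stealthy along $\alpha$, let $q_e=(q,\tilde q,z)=f(q_0,(\alpha\sigma)_A)$. Then $A$ is stealthy along $\alpha\sigma$ if and only if $q_e\notin Q_{\textsf{att}}$.
   Context: A plant is a finite automaton $G=(X,\Sigma,\delta,X_0)$ with partial transition function $\delta$ (extended to strings), initial states $X_0\subseteq X$; $\mathcal{L}(G,x_0)=\{s:\delta(x_0,s)\text{ defined}\}$, $\mathcal{L}(G)=\bigcup_{x_0\in X_0}\mathcal{L}(G,x_0)$. $\Sigma=\Sigma_o\dot\cup\Sigma_{uo}=\Sigma_c\dot\cup\Sigma_{uc}$, $P:\Sigma^*\to\Sigma_o^*$ the natural projection. A supervisor is $S:P(\mathcal{L}(G))\to\Gamma=\{\gamma\subseteq\Sigma:\Sigma_{uc}\subseteq\gamma\}$, realized by a deterministic automaton $H=(Z,\Sigma,\xi,z_0)$ with $\xi(z,\sigma)\neq z\Rightarrow\sigma\in\Sigma_o$ and $\Delta_H(\xi(z_0,s))=S(P(s))$ for $s\in\mathcal{L}(S/G)$ ($\Delta_H(z)$ = events defined at $z$). For any map $T$ from observable strings to subsets of $\Sigma$, $\mathcal{L}(T/G,x_0)$ is defined by $\epsilon\in\mathcal{L}(T/G,x_0)$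 and $s\sigma\in\mathcal{L}(T/G,x_0)$ iff $s\in\mathcal{L}(T/G,x_0)$, $s\sigma\in\mathcal{L}(G,x_0)$, $\sigma\in T(P(s))$; $\mathcal{L}(T/G)=\bigcup_{x_0}\mathcal{L}(T/G,x_0)$. The current-state estimate is $\mathcal{E}^C_{S/G}(\beta)=\{\delta(x_0,s):x_0\in X_0,s\in\mathcal{L}(S/G,x_0),P(s)=\beta\}$. An attacker, for vulnerable events $\Sigma_v\subseteq\Sigma_o$, is a map $A:P(\mathcal{L}(G))\to\Sigma_o\cup\{\epsilon\}$ with $A(\epsilon)=\epsilon$ and, for $\alpha\sigma\in P(\mathcal{L}(G))$, $A(\alpha\sigma)=\sigma$ if $\sigma\notin\Sigma_v$ and $A(\alpha\sigma)\in\Sigma_v\cup\{\epsilon\}$ if $\sigma\in\Sigma_v$. It induces $g_A(\epsilon)=\epsilon$, $g_A(\alpha\sigma)=g_A(\alpha)A(\alpha\sigma)$, and $S_A=S\circ g_A$. $A$ is stealthy along $\alpha\in P(\mathcal{L}(S_A/G))$ if $\mathcal{E}^C_{S/G}(g_A(\alpha))\neq\emptyset$. Operators: for $q\subseteq X$, $\gamma\subseteq\Sigma$, $\sigma\in\Sigma_o$: $\textsf{UR}_\gamma(q)=\{\delta(x,s):x\in q,s\in(\Sigma_{uo}\cap\gamma)^*\}$, $\textsf{NX}_\sigma(q)=\{\delta(x,\sigma):x\in q\}$, $\textsf{NX}_\epsilon(q)=q$, $\mathcal{O}(q,\gamma)=\{\sigma\in\Sigma_o\cap\gamma:\exists x\in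 q,\exists w\in(\Sigma_{uo}\cap\gamma)^*,\delta(x,w\sigma)\text{ defined}\}$. Augmented system: states $\tilde X\subseteq X_0\times X$, $\tilde X_0=\{(x_0,x_0)\}$, $\tilde\delta((x_0,x),\sigma)=(x_0,\delta(x,\sigma))$; $\widetilde{\textsf{UR}},\widetilde{\textsf{NX}},\mathcal{O}(\tilde q,\gamma)$ defined analogously. All Attack Structure: for $\sigma\in\Sigma_o$, $\hat\sigma$ is a doctored copy, $\hat\epsilon$ an erasure symbol; $\mathcal{V}(\sigma)=\{\hat\sigma':\sigma'\in\Sigma_v\}\cup\{\hat\epsilon\}$ if $\sigma\in\Sigma_v$, else $\{\hat\sigma\}$. $M=(Q,\Sigma_M,f,q_0)$ with $\Sigma_M=\Sigma_o\cup\{\hat\sigma\}\cup\{\hat\epsilon\}$, $q_0=(X_0,\tilde X_0,z_0)$, states reachable from $q_0$, $Q=Q_e\dot\cup Q_a$: environment states $(q,\tilde q,z)$, $q\subseteq X,\tilde q\subseteq\tilde X,z\in Z\cup\{z_{\textsf{att}}\}$ ($z_{\textsf{att}}$ new, $\Delta_H(z_{\textsf{att}})=\emptyset$); attack states $(q,\tilde q,z,\sigma)$. At $(q,\tilde q,z)$ enabled events are $\mathcal{O}(\tilde q,\Delta_H(z))$ if $z\in Z$, none if $z=z_{\textsf{att}}$, with $f((q,\tilde q,z),\sigma)=(q,\tilde q,z,\sigma)$. At $(q,\tilde q,z,\sigma)$ enabled events are $\mathcal{V}(\sigma)$, with $f((q,\tilde q,z,\sigma),\hat\sigma_a)=(q',\tilde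 q',z')$, $q'=\textsf{NX}_{\sigma_a}(\textsf{UR}_{\Delta_H(z)}(q))$, $\tilde q'=\widetilde{\textsf{NX}}_\sigma(\widetilde{\textsf{UR}}_{\Delta_H(z)}(\tilde q))$, $z'=\xi(z,\sigma_a)$ if $q'\ne\emptyset$ (with $\xi(z,\epsilon)=z$), $z'=z_{\textsf{att}}$ otherwise. $Q_{\textsf{att}}=\{(q,\tilde q,z)\in Q_e:z=z_{\textsf{att}}\}$ is the set of attack-revealing states. For an attacker $A$ and $\alpha=\sigma_1\cdots\sigma_n$, the extended string is $\alpha_A=\sigma_1\hat\sigma_{a1}\cdots\sigma_n\hat\sigma_{an}$ with $\sigma_{ai}=A(\sigma_1\cdots\sigma_i)$ (and $\hat\sigma_{ai}=\hat\epsilon$ when $\sigma_{ai}=\epsilon$). *)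

From HB Require Import structures.
From mathcomp Require Import all_boot.
From mathcomp Require Import boolp.

Set Implicit Arguments.
Unset Strict Implicit.
Unset Printing Implicit Defensive.

Section DES.

Variables (X Sigma Z : finType).
Variable delta : X -> Sigma -> option X.
Variable So : {set Sigma}.

Fixpoint deltas (x : X) (s : seq Sigma) : option X :=
  match s with
  | [::] => Some x
  | e :: s' => obind (fun y => deltas y s') (delta x e)
  end.

Definition inLG (x0 : X) (s : seq Sigma) : bool := deltas x0 s != None.

Definition P (s : seq Sigma) : seq Sigma := [seq e <- s | e \in So].

Inductive Lsup (T : seq Sigma -> {set Sigma}) (x0 : X) : seq Sigma -> Prop :=
| Lsup_nil : Lsup T x0 [::]
| Lsup_snoc s e : Lsup T x0 s -> inLG x0 (rcons s e) -> e \in T (P s) ->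
                  Lsup T x0 (rcons s e).

Definition inPLG (X0 : {set X}) (beta : seq Sigma) : Prop :=
  exists x0 s, [/\ x0 \in X0, inLG x0 s & P s = beta].

Definition inPLsup (T : seq Sigma -> {set Sigma}) (X0 : {set X})
  (beta : seq Sigma) : Prop :=
  exists x0 s, [/\ x0 \in X0, Lsup T x0 s & P s = beta].

Definition is_supervisor (Suc : {set Sigma}) (X0 : {set X})
  (S : seq Sigma -> {set Sigma}) : Prop :=
  forall beta, inPLG X0 beta -> Suc \subset S beta.

Definition estimate (S : seq Sigma -> {set Sigma}) (X0 : {set X})
  (beta : seq Sigma) (x : X) : Prop :=
  exists x0 s, [/\ x0 \in X0, Lsup S x0 s, P s = beta & deltas x0 s = Some x].

Variable xi : Z -> Sigma -> option Z.

Fixpoint xis (z : Z) (s : seq Sigma) : option Z :=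
  match s with
  | [::] => Some z
  | e :: s' => obind (fun y => xis y s') (xi z e)
  end.

Definition DeltaH (z : Z) : {set Sigma} := [set e | xi z e != None].

Definition realizes (X0 : {set X}) (S : seq Sigma -> {set Sigma}) (z0 : Z) : Prop :=
  (forall z e z', xi z e = Some z' -> z' != z -> e \in So) /\
  (forall x0 s, x0 \in X0 -> Lsup S x0 s ->
     exists z, xis z0 s = Some z /\ DeltaH z = S (P s)).

(* attackers: None encodes epsilon *)
Definition is_attacker (Sv : {set Sigma}) (X0 : {set X})
  (A : seq Sigma -> option Sigma) : Prop :=
  A [::] = None /\
  forall alpha e, inPLG X0 (rcons alpha e) ->
    (e \notin Sv -> A (rcons alpha e) = Some e) /\
    (e \in Sv -> match A (rcons alpha e) return Prop with
                 | Some e' => is_true (e' \in Sv)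
                 | None => True
                 end).

Definition oseq (o : option Sigma) : seq Sigma :=
  match o with Some e => [:: e] | None => [::] end.

Definition gA (A : seq Sigma -> option Sigma) (alpha : seq Sigma) : seq Sigma :=
  flatten [seq oseq (A (take n alpha)) | n <- iota 1 (size alpha)].

Definition SA (S : seq Sigma -> {set Sigma}) (A : seq Sigma -> option Sigma)
  : seq Sigma -> {set Sigma} := fun beta => S (gA A beta).

Definition stealthy (S : seq Sigma -> {set Sigma}) (X0 : {set X})
  (A : seq Sigma -> option Sigma) (alpha : seq Sigma) : Prop :=
  exists x, estimate S X0 (gA A alpha) x.

(* Sigma_M : observable events, doctored copies, erasure *)
Inductive symM := Ev of Sigma | Hat of Sigma | HatEps.

(* states; option Z with None = z_att *)
Inductive stM :=
| Env of {set X} & {set X * X} & option Z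
| Att of {set X} & {set X * X} & option Z & Sigma.

Definition DeltaH' (oz : option Z) : {set Sigma} :=
  match oz with Some z => DeltaH z | None => set0 end.

Definition uo_in (gamma : {set Sigma}) (w : seq Sigma) : bool :=
  all (fun e => (e \notin So) && (e \in gamma)) w.

Definition UR (gamma : {set Sigma}) (q : {set X}) : {set X} :=
  [set y | `[< exists x w, [/\ x \in q, uo_in gamma w & deltas x w = Some y] >]].

Definition URt (gamma : {set Sigma}) (qt : {set X * X}) : {set X * X} :=
  [set p | `[< exists p0 w, [/\ p0 \in qt, uo_in gamma w, p.1 = p0.1
                              & deltas p0.2 w = Some p.2] >]].

Definition NX (e : Sigma) (q : {set X}) : {set X} :=
  [set y | [exists x in q, delta x e == Some y]].

Definition NXa (oe : option Sigma) (q : {set X}) : {set X} :=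
  match oe with Some e => NX e q | None => q end.

Definition NXt (e : Sigma) (qt : {set X * X}) : {set X * X} :=
  [set p | [exists p0 in qt, (p0.1 == p.1) && (delta p0.2 e == Some p.2)]].

Definition Obs (qt : {set X * X}) (gamma : {set Sigma}) : {set Sigma} :=
  [set e | (e \in So) && (e \in gamma) &&
     `[< exists p w, [/\ p \in qt, uo_in gamma w & deltas p.2 (rcons w e) != None] >]].

Variable Sv : {set Sigma}.

(* V(sigma), with None encoding hat-epsilon and Some a encoding hat-a *)
Definition Vpred (e : Sigma) (oa : option Sigma) : bool :=
  if e \in Sv then match oa with Some a => a \in Sv | None => true end
  else oa == Some e.

Definition xiopt (oz : option Z) (oa : option Sigma) : option Z :=
  match oz, oa with
  | Some z, None => Some z
  | Some z, Some a => xi z a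
  | None, _ => None
  end.

Definition attstep (q : {set X}) (qt : {set X * X}) (oz : option Z) (e : Sigma)
  (oa : option Sigma) : option stM :=
  if Vpred e oa then
    let gamma := DeltaH' oz in
    let q' := NXa oa (UR gamma q) in
    let qt' := NXt e (URt gamma qt) in
    Some (Env q' qt' (if q' != set0 then xiopt oz oa else None))
  else None.

Definition fM (st : stM) (m : symM) : option stM :=
  match st, m with
  | Env q qt (Some z), Ev e =>
      if e \in Obs qt (DeltaH z) then Some (Att q qt (Some z) e) else None
  | Att q qt oz e, Hat a => attstep q qt oz e (Some a)
  | Att q qt oz e, HatEps => attstep q qt oz e None
  | _, _ => None
  end.

Definition frun (st : stM) (ms : seq symM) : option stM :=
  foldl (fun ost m => obind (fun s => fM s m) ost) (Some st) ms.

Definition q0M (X0 : {set X}) (z0 : Z) : stM :=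
  Env X0 [set p | (p.1 \in X0) && (p.2 == p.1)] (Some z0).

Definition hatsym (oa : option Sigma) : symM :=
  match oa with Some a => Hat a | None => HatEps end.

Definition extA (A : seq Sigma -> option Sigma) (alpha : seq Sigma) : seq symM :=
  flatten [seq [:: Ev p.2; hatsym (A (take p.1.+1 alpha))]
          | p <- zip (iota 0 (size alpha)) alpha].

Definition in_Qatt (st : stM) : bool :=
  match st with Env _ _ None => true | _ => false end.

End DES.

(* Along a stealthy observation b, the environment state (q, qt, z) that M
   reaches on b_A satisfies three invariants: z is the state of H after the
   doctored observation g_A(b), hence Delta_H(z) = S(g_A(b)); the unobservable
   reach of q under Delta_H(z) is exactly the operator's estimate
   E^C_{S/G}(g_A(b)); and the unobservable reach of qt contains every
   (initial, current) state pair of the attacked loop S_A/G consistent with b.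
   The last invariant makes every genuine next observation sigma enabled in M.
   After the attack move to sigma_a, the unobservable reach of the new q is the
   estimate after g_A(b sigma) when H enables sigma_a; when H disables sigma_a
   that estimate is empty and M sends z to z_att anyway. So M enters Q_att
   exactly when the estimate becomes empty, i.e. when stealthiness is lost. *)

From mathcomp Require Import all_boot.
From mathcomp Require Import boolp.

Set Implicit Arguments.
Unset Strict Implicit.
Unset Printing Implicit Defensive.

Section Strings.

Variables (Sigma : finType) (So : {set Sigma}).

Lemma P_cat s1 s2 : P So (s1 ++ s2) = P So s1 ++ P So s2.
Proof. exact: filter_cat. Qed.

Lemma P_rcons s e : P So (rcons s e) = if e \in So then rcons (P So s) e else P So s.
Proof. exact: filter_rcons. Qed.

Lemma P_rcons_obs s g e : P So s = rcons g e -> e \in So.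
Proof.
move=> Ps; have : e \in P So s by rewrite Ps mem_rcons mem_head.
by rewrite mem_filter => /andP [].
Qed.

Lemma P_rconsP s g e : e \in So -> P So s = rcons g e ->
  exists s1 u, [/\ s = rcons s1 e ++ u, P So s1 = g & P So u = [::]].
Proof.
move=> eO; elim/last_ind: s => [|s e' IHs]; first by case: g.
rewrite P_rcons; case: ifP => e'O Ps.
  by case/rcons_inj: Ps => <- <-; exists s, [::]; rewrite cats0.
have [s1 [u [-> Ps1 Pu]]] := IHs Ps.
by exists s1, (rcons u e'); rewrite rcons_cat P_rcons e'O.
Qed.

Lemma uo_in_rcons g w e :
  uo_in So g (rcons w e) = uo_in So g w && ((e \notin So) && (e \in g)).
Proof. by rewrite /uo_in all_rcons andbC. Qed.

Lemma uo_in_P g w : uo_in So g w -> P So w = [::].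
Proof.
by elim: w => [|e w IHw] //= /andP [/andP [/negbTE eNO _] /IHw]; rewrite /P /= eNO.
Qed.

Lemma gA_rcons (A : seq Sigma -> option Sigma) alpha e :
  gA A (rcons alpha e) = gA A alpha ++ oseq (A (rcons alpha e)).
Proof.
rewrite /gA size_rcons -(addn1 (size alpha)) iotaD map_cat flatten_cat /= cats0 add1n.
rewrite take_oversize ?size_rcons //; congr (_ ++ _); congr flatten.
apply/eq_in_map => k; rewrite mem_iota add1n ltnS => /andP [_ k_le].
by rewrite -cats1 takel_cat.
Qed.

Lemma extA_rcons (A : seq Sigma -> option Sigma) alpha e :
  extA A (rcons alpha e) = extA A alpha ++ [:: Ev e; hatsym (A (rcons alpha e))].
Proof.
rewrite /extA size_rcons -(addn1 (size alpha)) iotaD add0n /= cats1.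
rewrite zip_rcons ?size_iota // map_rcons -cats1 flatten_cat /=.
rewrite take_oversize ?size_rcons //; congr (_ ++ _); congr flatten.
apply/eq_in_map => p p_in.
have : p.1 \in unzip1 (zip (iota 0 (size alpha)) alpha) by apply: map_f.
by rewrite unzip1_zip ?size_iota // mem_iota add0n => lt_p; rewrite -cats1 takel_cat.
Qed.

Lemma Vpred_obs (Sv : {set Sigma}) e a :
  Sv \subset So -> e \in So -> Vpred Sv e (Some a) -> a \in So.
Proof.
move=> SvO eO; rewrite /Vpred; by case: ifP => [_ /(subsetP SvO) | _ /eqP [->]].
Qed.

End Strings.

Section Plant.

Variables (X Sigma : finType) (delta : X -> Sigma -> option X) (So : {set Sigma}).

Lemma deltas_cat x s1 s2 :
  deltas delta x (s1 ++ s2) = obind (fun y => deltas delta y s2) (deltas delta x s1).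
Proof. by elim: s1 x => [|e s1 IHs] x //=; case: (delta x e). Qed.

Lemma deltas_rcons x s e :
  deltas delta x (rcons s e) = obind (fun y => delta y e) (deltas delta x s).
Proof.
by rewrite -cats1 deltas_cat; case: (deltas delta x s) => //= y; case: (delta y e).
Qed.

Lemma URP (g : {set Sigma}) (q : {set X}) y :
  reflect (exists x w, [/\ x \in q, uo_in So g w & deltas delta x w = Some y])
          (y \in UR delta So g q).
Proof. rewrite inE; exact: asboolP. Qed.

Lemma URtP (g : {set Sigma}) (qt : {set X * X}) p :
  reflect (exists p0 w, [/\ p0 \in qt, uo_in So g w, p.1 = p0.1
                           & deltas delta p0.2 w = Some p.2])
          (p \in URt delta So g qt).
Proof. rewrite inE; exact: asboolP. Qed.

Lemma NXP e (q : {set X}) y :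
  reflect (exists2 x, x \in q & delta x e = Some y) (y \in NX delta e q).
Proof.
rewrite inE; apply: (iffP existsP) => [[x /andP [xq /eqP]] | [x xq dx]]; first by exists x.
by exists x; rewrite xq dx eqxx.
Qed.

Lemma NXtP e (qt : {set X * X}) p :
  reflect (exists2 p0, p0 \in qt & p0.1 = p.1 /\ delta p0.2 e = Some p.2)
          (p \in NXt delta e qt).
Proof.
rewrite inE; apply: (iffP existsP) => [[p0 /andP [p0q /andP [/eqP ? /eqP ?]]] | ].
  by exists p0.
by case=> p0 p0q [p01 dp0]; exists p0; rewrite p0q p01 dp0 !eqxx.
Qed.

Lemma subset_UR (g : {set Sigma}) (q : {set X}) : q \subset UR delta So g q.
Proof. by apply/subsetP => x xq; apply/URP; exists x, [::]. Qed.

Lemma UR_eq0 (g : {set Sigma}) (q : {set X}) : (UR delta So g q == set0) = (q == set0).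
Proof.
apply/idP/idP => [/eqP UR0 | /eqP ->]; first by rewrite -subset0 -UR0 subset_UR.
by apply/eqP/setP => y; rewrite in_set0; apply/negbTE/URP => -[x [w []]]; rewrite in_set0.
Qed.

Section Supervised.

Variable T : seq Sigma -> {set Sigma}.

Lemma Lsup_rcons x0 s e :
  Lsup delta So T x0 (rcons s e) <->
  [/\ Lsup delta So T x0 s, inLG delta x0 (rcons s e) & e \in T (P So s)].
Proof.
split; last by case; constructor.
move=> Lse; remember (rcons s e) as t eqn:Et; case: Lse Et; first by case: s.
by move=> s' e' Ls' inL e'T /rcons_inj [<- <-].
Qed.

Lemma Lsup_prefix x0 s1 s2 : Lsup delta So T x0 (s1 ++ s2) -> Lsup delta So T x0 s1.
Proof.
elim/last_ind: s2 => [|s2 e IHs]; first by rewrite cats0.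
by rewrite -rcons_cat => /Lsup_rcons [/IHs].
Qed.

Lemma Lsup_inLG x0 s : Lsup delta So T x0 s -> inLG delta x0 s.
Proof. by case. Qed.

Lemma Lsup_uo_suffix x0 s w :
  Lsup delta So T x0 (s ++ w) -> P So w = [::] -> uo_in So (T (P So s)) w.
Proof.
elim/last_ind: w => [|w e IHw] //.
rewrite -rcons_cat P_rcons => /Lsup_rcons [Lsw _ eT].
case: ifP => eO Pw; first by case: (P So w) Pw.
by rewrite uo_in_rcons eO (IHw Lsw Pw) /=; rewrite P_cat Pw cats0 in eT.
Qed.

Lemma Lsup_cat_uo x0 s w :
  Lsup delta So T x0 s -> uo_in So (T (P So s)) w -> inLG delta x0 (s ++ w) ->
  Lsup delta So T x0 (s ++ w).
Proof.
move=> Ls; elim/last_ind: w => [|w e IHw]; first by rewrite cats0.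
rewrite uo_in_rcons -rcons_cat => /andP [wuo /andP [_ eT]] inL.
constructor => //; last by rewrite P_cat (uo_in_P wuo) cats0.
by apply: IHw => //; move: inL; rewrite /inLG deltas_rcons; case: deltas.
Qed.

Variable X0 : {set X}.

Definition aug_estimate (b : seq Sigma) (x0 x : X) : Prop :=
  exists s, [/\ x0 \in X0, Lsup delta So T x0 s, P So s = b & deltas delta x0 s = Some x].

Definition estimate_set b : {set X} := [set x | `[< estimate delta So T X0 b x >]].

Definition aug_estimate_set b : {set X * X} := [set p | `[< aug_estimate b p.1 p.2 >]].

Lemma estimate_setP b x :
  reflect (exists x0, aug_estimate b x0 x) (x \in estimate_set b).
Proof. rewrite inE; exact: asboolP. Qed.

Lemma aug_estimate_setP b x0 x :
  reflect (aug_estimate b x0 x) ((x0, x) \in aug_estimate_set b).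
Proof. rewrite inE; exact: asboolP. Qed.

Lemma inPLsup_aug b : inPLsup delta So T X0 b <-> exists x0 x, aug_estimate b x0 x.
Proof.
split => [[x0 [s [x0X Ls Ps]]] | [x0 [x [s [x0X Ls Ps _]]]]]; last by exists x0, s.
move: (Lsup_inLG Ls); rewrite /inLG; case Ex: deltas => [x|] // _.
by exists x0, x, s.
Qed.

Lemma inPLsup_inPLG b : inPLsup delta So T X0 b -> inPLG delta So X0 b.
Proof. by case=> x0 [s [x0X /Lsup_inLG inL Ps]]; exists x0, s. Qed.

Lemma inPLsup_rcons_obs b e : inPLsup delta So T X0 (rcons b e) -> e \in So.
Proof. by case=> x0 [s [_ _ /P_rcons_obs]]. Qed.

Lemma aug_estimate_rcons b e x0 x : e \in So ->
  aug_estimate (rcons b e) x0 x <->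
  exists y1 y2 u, [/\ aug_estimate b x0 y1, delta y1 e = Some y2, e \in T b,
                     uo_in So (T (rcons b e)) u & deltas delta y2 u = Some x].
Proof.
move=> eO; split.
- case=> s [x0X Ls Ps dx]; have [s1 [u [Es Ps1 Pu]]] := P_rconsP eO Ps.
  rewrite {s Ps}Es in Ls dx.
  have uuo := Lsup_uo_suffix Ls Pu; rewrite P_rcons eO Ps1 in uuo.
  have /Lsup_rcons [Ls1 _ eT] := Lsup_prefix Ls.
  move: dx; rewrite deltas_cat deltas_rcons.
  case dy1: (deltas delta x0 s1) => [y1|] //=; case dy2: (delta y1 e) => [y2|] //= dx.
  by exists y1, y2, u; split => //; [exists s1 | rewrite -Ps1].
- case=> y1 [y2 [u [[s1 [x0X Ls1 Ps1 dy1]] dy2 eT uuo dx]]].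
  have dy2' : deltas delta x0 (rcons s1 e) = Some y2 by rewrite deltas_rcons dy1.
  have Ps1e : P So (rcons s1 e) = rcons b e by rewrite P_rcons eO Ps1.
  exists (rcons s1 e ++ u); split => //.
  + apply: Lsup_cat_uo; rewrite ?Ps1e //; last by rewrite /inLG deltas_cat dy2' /= dx.
    by constructor; rewrite /inLG ?dy2' ?Ps1.
  + by rewrite P_cat Ps1e (uo_in_P uuo) cats0.
  + by rewrite deltas_cat dy2'.
Qed.

Lemma inPLsup_prefix b e : inPLsup delta So T X0 (rcons b e) -> inPLsup delta So T X0 b.
Proof.
move=> inb; have eO := inPLsup_rcons_obs inb.
case/inPLsup_aug: inb => x0 [x /(aug_estimate_rcons _ _ _ eO) [y1 [_ [_ [aug1 _ _ _ _]]]]].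
by apply/inPLsup_aug; exists x0, y1.
Qed.

Lemma estimate_set_nil : estimate_set [::] = UR delta So (T [::]) X0.
Proof.
apply/setP => x; apply/estimate_setP/URP => [[x0 [s [x0X Ls Ps dx]]] | [x0 [w [x0X wuo dx]]]].
  by exists x0, s; split => //; exact: (Lsup_uo_suffix (s := [::]) Ls Ps).
exists x0, w; split => //; last exact: uo_in_P wuo.
by apply: (Lsup_cat_uo (s := [::])); [constructor | | rewrite /inLG dx].
Qed.

Lemma UR_estimate_set b : UR delta So (T b) (estimate_set b) = estimate_set b.
Proof.
apply/eqP; rewrite eqEsubset subset_UR andbT.
apply/subsetP => x /URP [y [w [/estimate_setP [x0 [s [x0X Ls Ps dy]]] wuo dx]]].
apply/estimate_setP; exists x0, (s ++ w); split => //.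
- by apply: Lsup_cat_uo; rewrite ?Ps // /inLG deltas_cat dy /= dx.
- by rewrite P_cat Ps (uo_in_P wuo) cats0.
- by rewrite deltas_cat dy.
Qed.

Lemma estimate_set_rcons g a : a \in So ->
  estimate_set (rcons g a) =
  if a \in T g then UR delta So (T (rcons g a)) (NX delta a (estimate_set g)) else set0.
Proof.
move=> aO; apply/setP => x; case: ifPn => aT; last first.
  rewrite in_set0; apply/negbTE/estimate_setP => -[x0].
  by case/(aug_estimate_rcons _ _ _ aO) => y1 [y2 [u [_ _ aT' _ _]]]; rewrite aT' in aT.
apply/estimate_setP/URP => [[x0] | [y2 [u [/NXP [y1 /estimate_setP [x0 aug1] dy2] uuo dx]]]].
  case/(aug_estimate_rcons _ _ _ aO) => y1 [y2 [u [aug1 dy2 _ uuo dx]]].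
  by exists y2, u; split => //; apply/NXP; exists y1 => //; apply/estimate_setP; exists x0.
by exists x0; apply/aug_estimate_rcons => //; exists y1, y2, u.
Qed.

Lemma estimate_set_prefix g a :
  estimate_set (rcons g a) != set0 -> estimate_set g != set0.
Proof.
case/set0Pn => x /estimate_setP [x0 aug]; case: (aug) => s [_ _ /P_rcons_obs aO _].
case/(aug_estimate_rcons _ _ _ aO): aug => y1 [_ [_ [aug1 _ _ _ _]]].
by apply/set0Pn; exists y1; apply/estimate_setP; exists x0.
Qed.

Lemma aug_estimate_set_nil :
  aug_estimate_set [::] \subset URt delta So (T [::]) [set p | (p.1 \in X0) && (p.2 == p.1)].
Proof.
apply/subsetP => -[x0 x] /aug_estimate_setP [s [x0X Ls Ps dx]].
apply/URtP; exists (x0, x0), s; split => //; first by rewrite inE x0X eqxx.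
exact: (Lsup_uo_suffix (s := [::]) Ls Ps).
Qed.

Lemma aug_estimate_set_rcons b e (qt : {set X * X}) : e \in So ->
  aug_estimate_set b \subset URt delta So (T b) qt ->
  aug_estimate_set (rcons b e) \subset
    URt delta So (T (rcons b e)) (NXt delta e (URt delta So (T b) qt)).
Proof.
move=> eO sub_qt; apply/subsetP => -[x0 x] /aug_estimate_setP.
case/(aug_estimate_rcons _ _ _ eO) => y1 [y2 [u [aug1 dy2 _ uuo dx]]].
apply/URtP; exists (x0, y2), u; split => //; apply/NXtP; exists (x0, y1) => //.
by apply: (subsetP sub_qt); apply/aug_estimate_setP.
Qed.

Lemma obs_enabled b e (qt : {set X * X}) : e \in So ->
  inPLsup delta So T X0 (rcons b e) ->
  aug_estimate_set b \subset URt delta So (T b) qt ->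
  e \in Obs delta So qt (T b).
Proof.
move=> eO /inPLsup_aug [x0 [x /(aug_estimate_rcons _ _ _ eO)]] [y1 [y2 [u [aug1 dy2 eT _ _]]]].
move=> sub_qt; have /aug_estimate_setP/(subsetP sub_qt) := aug1.
case/URtP => p0 [w [p0q wuo _ dw]].
rewrite inE eO eT /=; apply/asboolP; exists p0, w; split => //.
by rewrite deltas_rcons dw /= dy2.
Qed.

End Supervised.

End Plant.

Section Supervisor.

Variables (Sigma Z : finType) (xi : Z -> Sigma -> option Z) (So : {set Sigma}).

Lemma xis_rcons z s e : xis xi z (rcons s e) = obind (fun y => xi y e) (xis xi z s).
Proof.
elim: s z => [|e' s IHs] z /=; first by case: (xi z e).
by case: (xi z e').
Qed.

Hypothesis xi_moves_obs : forall z e z', xi z e = Some z' -> z' != z -> e \in So.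

Lemma xis_P z s z' : xis xi z s = Some z' -> xis xi z (P So s) = Some z'.
Proof.
elim: s z => [|e s IHs] z //=; case xze: (xi z e) => [y|] //= /IHs.
rewrite /P /=; case: ifP => eO /=; first by rewrite xze.
suff -> : y = z by [].
by apply/eqP; apply: contraFT eO; apply: xi_moves_obs xze.
Qed.

Lemma DeltaHP z e : (e \in DeltaH xi z) = (xi z e != None).
Proof. by rewrite inE. Qed.

End Supervisor.

Section AllAttackStructure.

Variables (X Sigma Z : finType) (delta : X -> Sigma -> option X) (So Sv : {set Sigma})
  (xi : Z -> Sigma -> option Z).

Lemma frun_cat st st' s1 s2 :
  frun delta So xi Sv st s1 = Some st' ->
  frun delta So xi Sv st (s1 ++ s2) = frun delta So xi Sv st' s2.
Proof. by rewrite /frun foldl_cat => ->. Qed.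

Lemma frun_env_step q qt z e oa :
  e \in Obs delta So qt (DeltaH xi z) -> Vpred Sv e oa ->
  let q' := NXa delta oa (UR delta So (DeltaH xi z) q) in
  frun delta So xi Sv (Env Sigma q qt (Some z)) [:: Ev e; hatsym oa] =
  Some (Env Sigma q' (NXt delta e (URt delta So (DeltaH xi z) qt))
                     (if q' != set0 then xiopt xi (Some z) oa else None)).
Proof. by move=> eObs eV; case: oa eV => [a|] eV; rewrite /frun /= eObs /= /attstep eV. Qed.

End AllAttackStructure.

Section StealthyAttack.

Variables (X Sigma Z : finType) (delta : X -> Sigma -> option X) (X0 : {set X})
  (So Sv : {set Sigma}) (S : seq Sigma -> {set Sigma}) (xi : Z -> Sigma -> option Z)
  (z0 : Z) (A : seq Sigma -> option Sigma).

Hypothesis xi_moves_obs : forall z e z', xi z e = Some z' -> z' != z -> e \in So.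
Hypothesis H_realizes_S : forall x0 s, x0 \in X0 -> Lsup delta So S x0 s ->
  exists z, xis xi z0 s = Some z /\ DeltaH xi z = S (P So s).
Hypothesis Sv_obs : Sv \subset So.
Hypothesis A_attacker : is_attacker delta So Sv X0 A.

Lemma DeltaH_estimate g z :
  estimate_set delta So S X0 g != set0 -> xis xi z0 g = Some z -> DeltaH xi z = S g.
Proof.
case/set0Pn => x /estimate_setP [x0 [s [x0X Ls Ps _]]] xisz.
have [z' [xisz' DHz']] := H_realizes_S x0X Ls.
by have := xis_P xi_moves_obs xisz'; rewrite Ps xisz => -[->]; rewrite DHz' Ps.
Qed.

Lemma stealthyE b :
  stealthy delta So S X0 A b <-> estimate_set delta So S X0 (gA A b) != set0.
Proof.
split => [[x est] | /set0Pn [x /estimate_setP est]]; last by exists x.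
by apply/set0Pn; exists x; apply/estimate_setP.
Qed.

Lemma stealthy_prefix b e :
  stealthy delta So S X0 A (rcons b e) -> stealthy delta So S X0 A b.
Proof.
rewrite !stealthyE gA_rcons; case: (A (rcons b e)) => [a|] /=; last by rewrite cats0.
by rewrite cats1; apply: estimate_set_prefix.
Qed.

Lemma attacker_Vpred b e :
  inPLG delta So X0 (rcons b e) -> Vpred Sv e (A (rcons b e)).
Proof.
case: A_attacker => _ A_rcons /A_rcons [nv v]; rewrite /Vpred.
by case: ifPn => [/v | /nv ->]; [case: A | rewrite eqxx].
Qed.

Definition env_inv b q qt z :=
  [/\ xis xi z0 (gA A b) = Some z, DeltaH xi z = S (gA A b),
      UR delta So (DeltaH xi z) q = estimate_set delta So S X0 (gA A b)
    & aug_estimate_set delta So (SA S A) X0 b \subset URt delta So (DeltaH xi z) qt].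

Lemma env_inv_enabled b q qt z :
  xis xi z0 (gA A b) = Some z ->
  UR delta So (S (gA A b)) q = estimate_set delta So S X0 (gA A b) ->
  aug_estimate_set delta So (SA S A) X0 b \subset URt delta So (SA S A b) qt ->
  let oz := if q != set0 then Some z else None in
  (stealthy delta So S X0 A b <-> oz != None) /\
  (forall z', oz = Some z' -> env_inv b q qt z').
Proof.
move=> xisz URq sub_qt /=.
have steal : stealthy delta So S X0 A b <-> q != set0 by rewrite stealthyE -URq UR_eq0.
case: (boolP (q != set0)) => q0; last by split; rewrite // steal (negbTE q0).
split=> [|_ [<-]]; first by rewrite steal q0.
have DHz : DeltaH xi z = S (gA A b) by apply: DeltaH_estimate; rewrite // -URq UR_eq0.
by split; rewrite ?DHz.
Qed.

Lemma env_inv_step b e q qt z :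
  env_inv b q qt z -> inPLsup delta So (SA S A) X0 (rcons b e) ->
  exists q' qt' oz,
    frun delta So xi Sv (Env Sigma q qt (Some z)) [:: Ev e; hatsym (A (rcons b e))]
      = Some (Env Sigma q' qt' oz) /\
    (stealthy delta So S X0 A (rcons b e) <-> oz != None) /\
    (forall z', oz = Some z' -> env_inv (rcons b e) q' qt' z').
Proof.
case=> xisz DHz URq sub_qt inb.
have eO := inPLsup_rcons_obs inb.
have eV := attacker_Vpred (inPLsup_inPLG inb).
rewrite DHz in URq sub_qt.
have eObs : e \in Obs delta So qt (DeltaH xi z).
  by rewrite DHz; exact: (obs_enabled (T := SA S A) eO inb sub_qt).
rewrite (frun_env_step q eObs eV); do 3 eexists; split; first reflexivity.
rewrite DHz; have sub_qt' := aug_estimate_set_rcons eO sub_qt.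
have := gA_rcons A b e; case: (A (rcons b e)) eV => [a|] eV /= gAe; last first.
  by rewrite cats0 in gAe; apply: env_inv_enabled; rewrite // gAe ?URq ?UR_estimate_set.
rewrite cats1 in gAe; have aO := Vpred_obs Sv_obs eO eV.
case: (boolP (a \in S (gA A b))) => aT; last first.
  have -> : xi z a = None by apply/eqP; move: aT; rewrite -DHz DeltaHP negbK.
  by rewrite if_same; split; rewrite // stealthyE gAe estimate_set_rcons // (negbTE aT) eqxx.
have [z' xiza] : exists z', xi z a = Some z'.
  by move: aT; rewrite -DHz DeltaHP; case: (xi z a) => // z' _; exists z'.
rewrite /= xiza; apply: env_inv_enabled => //; first by rewrite gAe xis_rcons xisz.
by rewrite gAe URq estimate_set_rcons // aT.
Qed.

Lemma env_inv_run b :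
  inPLsup delta So (SA S A) X0 b -> stealthy delta So S X0 A b ->
  exists q qt z,
    frun delta So xi Sv (q0M Sigma X0 z0) (extA A b) = Some (Env Sigma q qt (Some z)) /\
    env_inv b q qt z.
Proof.
elim/last_ind: b => [|b e IHb] inb steal.
  have [steal0 inv0] := env_inv_enabled (b := [::]) (q := X0) (z := z0) erefl
    (esym (estimate_set_nil _ _ _ _)) (aug_estimate_set_nil _ _ _ _).
  move/steal0: steal; case: ifP => // X00 _.
  exists X0, [set p | (p.1 \in X0) && (p.2 == p.1)], z0; split => //.
  by apply: inv0; rewrite X00.
have [q [qt [z [run inv]]]] := IHb (inPLsup_prefix inb) (stealthy_prefix steal).
have [q' [qt' [[z'|] [run' [steal' inv']]]]] := env_inv_step inv inb; last first.
  by move/steal': steal.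
exists q', qt', z'; split; last exact: inv'.
by rewrite extA_rcons (frun_cat _ run).
Qed.

End StealthyAttack.

Theorem lemma1 (X Sigma Z : finType) (delta : X -> Sigma -> option X)
  (X0 : {set X}) (So Suc Sv : {set Sigma}) (S : seq Sigma -> {set Sigma})
  (xi : Z -> Sigma -> option Z) (z0 : Z) (A : seq Sigma -> option Sigma)
  (alpha : seq Sigma) (sigma : Sigma) :
  is_supervisor delta So Suc X0 S ->
  realizes delta So xi X0 S z0 ->
  Sv \subset So ->
  is_attacker delta So Sv X0 A ->
  sigma \in So ->
  inPLsup delta So (SA S A) X0 (rcons alpha sigma) ->
  stealthy delta So S X0 A alpha ->
  exists qe,
    frun delta So xi Sv (q0M Sigma X0 z0) (extA A (rcons alpha sigma)) = Some qe /\
    (stealthy delta So S X0 A (rcons alpha sigma) <-> ~~ in_Qatt qe).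
Proof.
move=> _ [xi_moves_obs H_realizes_S] Sv_obs A_attacker _ inas steal.
have [q [qt [z [run inv]]]] :=
  env_inv_run xi_moves_obs H_realizes_S Sv_obs A_attacker (inPLsup_prefix inas) steal.
have [q' [qt' [oz [run' [steal' _]]]]] :=
  env_inv_step xi_moves_obs H_realizes_S Sv_obs A_attacker inv inas.
exists (Env Sigma q' qt' oz); split; first by rewrite extA_rcons (frun_cat _ run).
by rewrite steal'; case: oz {run' steal'}.
Qed.
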